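(* Let $\mathcal{X}=\mathcal{X}_1\times\cdots\times\mathcal{X}_K$ and let $P_1$ and $P_2$ be the transition kernels of the deterministic-scan Gibbs samplers targeting $\pi_1\in\mathcal{P}(\mathcal{X})$ and $\pi_2\in\mathcal{P}(\mathcal{X})$, respectively. Then for every $M\ge1$ and every $\mu\in\mathcal{N}(\pi_1,M)\cup\mathcal{N}(\pi_2,M)$, \[ \|\mu P_1-\mu P_2\|_{TV}\le 2MK\|\pi_1-\pi_2\|_{TV}. \]
   Context: $\mathcal{P}(\mathcal{X})$ is the set of probability distributions on $\mathcal{X}$; $\|\mu-\nu\|_{TV}=\sup_A|\mu(A)-\nu(A)|$. The deterministic-scan Gibbs sampler targeting $\pi$ is $P=P_{\cdot,1}\cdots P_{\cdot,K}$, where the $i$-th factor resamples coordinate $x_i$ from $\pi(\mathrm{d}x_i\mid\mathbf{x}^{(-i)})$, $\mathbf{x}^{(-i)}=(x_j)_{j\ne i}$, leaving other coordinates unchanged. $\mathcal{N}(\pi,M)=\{\mu\in\mathcal{P}(\mathcal{X}):\mu(A)\le M\pi(A)\ \forall A\}$; $\mu P(A)=\int P(\mathbf{x},A)\mu(\mathrm{d}\mathbf{x})$. *)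

From HB Require Import structures.
From mathcomp Require Import all_boot all_order all_algebra.
From mathcomp Require Import all_classical all_reals all_analysis measurable_realfun.
Set Implicit Arguments. Unset Strict Implicit. Unset Printing Implicit Defensive.
Import Order.TTheory GRing.Theory Num.Theory.
Local Open Scope classical_set_scope.
Local Open Scope ring_scope.

Definition prodm (K : nat) (dI : 'I_K -> measure_display)
  (T : forall i, measurableType (dI i)) := forall i : 'I_K, T i.

Definition prodm_display : measure_display. Proof. exact: default_measure_display. Qed.

Section prodm_instance.
Variables (K : nat) (dI : 'I_K -> measure_display)
  (T : forall i, measurableType (dI i)).

Definition prodm_gen : set (set (prodm T)) :=
  \bigcup_(i in [set: 'I_K])
    [set (fun x : prodm T => x i) @^-1` A | A in [set A : set (T i) | measurable A]].

Definition prodm_measurable : set (set (prodm T)) := <<s prodm_gen >>.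

HB.instance Definition _ := Pointed.on (prodm T).

Let prodm_set0 : prodm_measurable set0.
Proof. exact: sigma_algebra0. Qed.

Let prodm_setC A : prodm_measurable A -> prodm_measurable (~` A).
Proof. by move=> mA; rewrite -setTD; exact: sigma_algebraCD. Qed.

Let prodm_bigcup (F : (set (prodm T))^nat) :
  (forall i, prodm_measurable (F i)) -> prodm_measurable (\bigcup_i (F i)).
Proof. exact: sigma_algebra_bigcup. Qed.

HB.instance Definition _ := @isMeasurable.Build prodm_display (prodm T)
  prodm_measurable prodm_set0 prodm_setC prodm_bigcup.

End prodm_instance.

Section gibbs.
Variables (R : realType) (K : nat) (dI : 'I_K -> measure_display)
  (T : forall i, measurableType (dI i)).
Local Notation X := (prodm T).

Definition update (x : X) (i : 'I_K) (y : T i) : X := dfwith x i y.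
Arguments update : clear implicits.

(* Q is a version of the full conditional  pi(dx_i | x^(-i)) :
   - Q x is a probability measure on X_i,
   - Q x depends only on x^(-i) = (x_j)_{j <> i},
   - x |-> Q x B is measurable for every measurable B (Q is a kernel),
   - disintegration:  pi(A) = \int pi(dx) Q x {y | x with x_i:=y \in A}. *)
Definition full_conditional (pi : probability X R) (i : 'I_K)
    (Q : X -> probability (T i) R) : Prop :=
  [/\ (forall x x' : X, (forall j, j != i -> x j = x' j) -> Q x = Q x'),
      (forall B : set (T i), measurable B -> measurable_fun [set: X] (fun x : X => (Q x B : \bar R))) &
      (forall A : set X, measurable A ->
         pi A = \int[pi]_x (Q x (update x i @^-1` A)))%E].

(* one coordinate update  nu |-> nu P_{.,i}  where P_{.,i}(x,A) = Q x {y | update x i y \in A} *)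
Definition gibbs_step (i : 'I_K) (Q : X -> probability (T i) R)
    (nu : set X -> \bar R) : set X -> \bar R :=
  fun A => (\int[nu]_x (Q x (update x i @^-1` A)))%E.

(* deterministic scan:  mu P = mu P_{.,1} P_{.,2} ... P_{.,K} *)
Definition gibbs_scan (Q : forall i : 'I_K, X -> probability (T i) R)
    (mu : set X -> \bar R) : set X -> \bar R :=
  foldl (fun nu i => gibbs_step (Q i) nu) mu (enum 'I_K).

End gibbs.

Definition tv_dist d (T : measurableType d) (R : realType)
    (mu nu : set T -> \bar R) : \bar R :=
  ereal_sup [set (`|mu A - nu A|)%E | A in [set A : set T | measurable A]].

Definition nbhdN d (T : measurableType d) (R : realType)
    (pi : probability T R) (M : R) : set (probability T R) :=
  [set mu | forall A : set T, measurable A -> (mu A <= M%:E * pi A)%E].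

(* Swap the coordinate updates of the second scan for those of the first one
   at a time.  Gibbs steps contract the total variation distance, and the
   intermediate laws nu = mu P_{1,1} ... P_{1,i-1} stay in N(pi_1, M) because
   pi_1 is invariant under each P_{1,j}; hence it suffices that
   |nu P_{1,i}(A) - nu P_{2,i}(A)| <= 2M ||pi_1 - pi_2|| whenever nu <= M pi_1.
   Let A' agree with A on the i-th coordinate fibres through the points where
   P_{1,i}(x, A) >= P_{2,i}(x, A), and with the complement of A on the other
   fibres.  Since the full conditionals ignore x_i,
   |P_{1,i}(x, A) - P_{2,i}(x, A)| = P_{1,i}(x, A') - P_{2,i}(x, A'); integrating
   against nu <= M pi_1 and using pi_1 P_{1,i} = pi_1 and pi_2 P_{2,i} = pi_2
   bounds the difference by
   M (pi_1(A') - pi_2(A') + pi_2 P_{2,i}(A') - pi_1 P_{2,i}(A')) <= 2M ||pi_1 - pi_2||.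
   The case mu in N(pi_2, M) is symmetric. *)

From HB Require Import structures.
From mathcomp Require Import all_boot all_order all_algebra.
From mathcomp Require Import all_classical all_reals all_analysis measurable_realfun.
From mathcomp Require Import lra.
Import Order.TTheory GRing.Theory Num.Theory.
Local Open Scope classical_set_scope.
Local Open Scope ring_scope.

Set Implicit Arguments.
Unset Strict Implicit.

Section ereal_abs.
Context (R : realDomainType).
Local Open Scope ereal_scope.

Lemma abse_sub_le (x y t : \bar R) : x \is a fin_num -> y \is a fin_num ->
  x <= y + t -> y <= x + t -> `|x - y| <= t.
Proof.
move: x y t => [x| |] [y| |] [t| |] //= _ _; rewrite ?leey //.
rewrite -!EFinD !lee_fin => xy yx.
by rewrite ler_norml; apply/andP; split; lra.
Qed.

End ereal_abs.

Section total_variation.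
Context d (T : measurableType d) (R : realType).
Local Open Scope ereal_scope.
Implicit Types (mu nu : set T -> \bar R) (a b c : {finite_measure set T -> \bar R}).

Lemma le_tv_dist mu nu A : measurable A -> `|mu A - nu A| <= tv_dist mu nu.
Proof. by move=> mA; apply: ereal_sup_ubound; exists A. Qed.

Lemma tv_dist_ge0 mu nu : 0 <= tv_dist mu nu.
Proof. exact: le_trans (abse_ge0 _) (le_tv_dist mu nu measurable0). Qed.

Lemma tv_dist_le mu nu t :
  (forall A, measurable A -> `|mu A - nu A| <= t) -> tv_dist mu nu <= t.
Proof. by move=> le_t; apply: ge_ereal_sup => _ [A mA <-]; exact: le_t. Qed.

Lemma tv_distC mu nu : tv_dist mu nu = tv_dist nu mu.
Proof.
have abseBC (x y : \bar R) : `|x - y| = `|y - x|.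
  by move: x y => [x| |] [y| |] //=; rewrite distrC.
rewrite /tv_dist; congr ereal_sup; apply/seteqP; split => _ [A mA <-];
  by exists A => //; rewrite abseBC.
Qed.

Lemma tv_dist_triangle a b c : tv_dist a c <= tv_dist a b + tv_dist b c.
Proof.
apply: tv_dist_le => A mA.
apply: le_trans (leeD (le_tv_dist a b mA) (le_tv_dist b c mA)).
rewrite -(fineK (fin_num_measure a A mA)) -(fineK (fin_num_measure b A mA)).
rewrite -(fineK (fin_num_measure c A mA)) -!EFinB -EFinD lee_fin.
exact: ler_distD.
Qed.

Lemma tv_dist_self a : tv_dist a a = 0.
Proof.
apply/eqP; rewrite eq_le tv_dist_ge0 andbT; apply: tv_dist_le => A mA.
by rewrite -(fineK (fin_num_measure a A mA)) -EFinB subrr abse0.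
Qed.

End total_variation.

Section integral_comparison.
Context d (T : measurableType d) (R : realType).
Local Open Scope ereal_scope.
Implicit Types (a b : {finite_measure set T -> \bar R}) (f : T -> \bar R).

(* With the Jordan decomposition a - b = jp - jn, where jp is carried by the
   positive set P, we have a + jn = b + jp and jp(T) = a P - b P. *)
Lemma Hahn_le_integral a b f : measurable_fun setT f ->
  (forall x, 0 <= f x <= 1) ->
  exists2 P, measurable P & \int[a]_x f x <= \int[b]_x f x + (a P - b P).
Proof.
move=> mf f01; have f0 x : [set: T] x -> 0 <= f x by case/andP: (f01 x).
pose ab := cadd (charge_of_finite_measure a)
  (cscale (-1) (charge_of_finite_measure b)).
have [P [N PN]] := Hahn_decomposition ab.
have mP : measurable P by case: PN => -[].
exists P => //.
pose jp := jordan_pos PN; pose jn := jordan_neg PN.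
have a_jn_b_jp A : measurable A -> measure_add a jn A = measure_add b jp A.
  move=> mA; rewrite !measure_addE; change (a A + jn A = b A + jp A).
  have : a A + (-1)%:E * b A = jp A + (-1)%:E * jn A := jordan_decomp PN mA.
  have jpA : jp A \is a fin_num by exact: fin_num_measure.
  have jnA : jn A \is a fin_num by exact: fin_num_measure.
  move: (fin_num_measure a A mA) (fin_num_measure b A mA) jpA jnA; rewrite !mulN1e.
  move: (a A) (b A) (jp A) (jn A) => [x| |] [y| |] [z| |] [w| |] // _ _ _ _.
  by rewrite -!EFinB -!EFinD => -[xyzw]; congr EFin; lra.
have jpT : jp setT = a P - b P.
  by rewrite /jp jordan_posE cjordan_posE /crestr0 mem_set //= /crestr setTI
    /ab /cadd /= /cscale /= mulN1e.
have int_jp : \int[jp]_x f x <= a P - b P.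
  rewrite -jpT -[jp setT]mul1e -integral_cst //.
  by apply: ge0_le_integral => // x _; case/andP: (f01 x).
apply: (@le_trans _ _ (\int[a]_x f x + \int[jn]_x f x)).
  by rewrite leeDl // integral_ge0.
rewrite -!ge0_integral_measure_add // (eq_measure_integral (measure_add b jp)).
  by rewrite ge0_integral_measure_add // leeD2l.
by move=> A mA _; exact: a_jn_b_jp.
Qed.

Lemma le_integral_add_tv_dist a b f : measurable_fun setT f ->
  (forall x, 0 <= f x <= 1) ->
  \int[a]_x f x <= \int[b]_x f x + tv_dist a b.
Proof.
move=> mf f01; have [P mP] := Hahn_le_integral a b mf f01.
move/le_trans; apply; rewrite leeD2l //.
exact: le_trans (lee_abs _) (le_tv_dist a b mP).
Qed.

Lemma integrable_unit_valued a f : measurable_fun setT f ->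
  (forall x, 0 <= f x <= 1) -> a.-integrable setT f.
Proof.
move=> mf f01.
apply: (le_integrable _ mf _ (finite_measure_integrable_cst a 1 _)) => //.
move=> x _; case/andP: (f01 x) => f0 f1.
by rewrite gee0_abs //= normr1.
Qed.

Lemma abse_integralB_le_tv_dist a b f : measurable_fun setT f ->
  (forall x, 0 <= f x <= 1) ->
  `|\int[a]_x f x - \int[b]_x f x| <= tv_dist a b.
Proof.
move=> mf f01.
apply: abse_sub_le; try exact/integrable_fin_num/integrable_unit_valued.
  exact: le_integral_add_tv_dist.
by rewrite tv_distC; exact: le_integral_add_tv_dist.
Qed.

Lemma le_integral_dominated (mu nu : {measure set T -> \bar R}) (M : R) f :
  (0 <= M)%R -> (forall A, measurable A -> mu A <= M%:E * nu A) ->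
  (forall x, 0 <= f x) -> measurable_fun setT f ->
  \int[mu]_x f x <= M%:E * \int[nu]_x f x.
Proof.
move=> M0 mu_le f0 mf; pose Mnu := mscale (NngNum M0) nu.
rewrite -(ge0_integral_mscale nu measurableT (NngNum M0)) //.
exact: (ge0_le_measure_integral (m2 := Mnu)).
Qed.

End integral_comparison.

Section product_space.
Context (K : nat) (dI : 'I_K -> measure_display) (T : forall i, measurableType (dI i)).
Local Notation X := (prodm T).

Lemma measurable_coord (j : 'I_K) (A : set (T j)) : measurable A ->
  measurable ((fun x : X => x j) @^-1` A).
Proof. by move=> mA; apply: sub_sigma_algebra; exists j => //; exists A. Qed.

Lemma update_in (x : X) (i : 'I_K) (y : T i) : update x y i = y.
Proof. exact: dfwith_in. Qed.

Lemma update_out (x : X) (i : 'I_K) (y : T i) j : i != j -> update x y j = x j.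
Proof. exact: dfwith_out. Qed.

Lemma update_update (x : X) (i : 'I_K) (y z : T i) :
  update (update x y) z = update x z.
Proof.
apply: functional_extensionality_dep => j.
by have [<-|ij] := eqVneq i j; rewrite ?update_in // !update_out.
Qed.

Lemma measurable_update (i : 'I_K) :
  measurable_fun setT (fun p : X * T i => update p.1 p.2).
Proof.
apply: (@measurability _ _ _ _ _ _ (@prodm_gen K dI T)) => //.
move=> _ [_ [j _ [A mA <-]] <-]; rewrite setTI.
have [ij|ij] := eqVneq i j.
  subst j; rewrite (_ : _ @^-1` _ = setT `*` A); first exact: measurableX.
  by apply/seteqP; split => -[x y]; rewrite /= update_in; tauto.
rewrite (_ : _ @^-1` _ = ((fun x : X => x j) @^-1` A) `*` setT).
  by apply: measurableX => //; exact: measurable_coord.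
by apply/seteqP; split => -[x y]; rewrite /= update_out //; tauto.
Qed.

Lemma measurable_preimage_update (i : 'I_K) (x : X) (A : set X) :
  measurable A -> measurable (update x (i:=i) @^-1` A).
Proof.
move=> mA; have -> : update x (i:=i) @^-1` A =
    xsection ((fun p : X * T i => update p.1 p.2) @^-1` A) x.
  by apply/seteqP; split => y; rewrite /xsection /= inE.
apply: measurable_xsection; rewrite -[X in measurable X]setTI.
exact: measurable_update.
Qed.

End product_space.

Definition kernel_measurable d d' (X : measurableType d) (Y : measurableType d')
    (R : realType) (Q : X -> probability Y R) : Prop :=
  forall B, measurable B -> measurable_fun setT (fun x => Q x B).

Section gibbs_kernel.
Context (R : realType) (K : nat) (dI : 'I_K -> measure_display)
  (T : forall i, measurableType (dI i)).
Local Notation X := (prodm T).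
Local Open Scope ereal_scope.
Variables (i : 'I_K) (Q : X -> probability (T i) R).

Definition gibbs_kernel (x : X) (A : set X) : \bar R :=
  Q x (update x (i:=i) @^-1` A).

Definition ignores_coord : Prop :=
  forall x x' : X, (forall j, j != i -> x j = x' j) -> Q x = Q x'.

Lemma gibbs_kernel_ge0_le1 x A : measurable A -> 0 <= gibbs_kernel x A <= 1.
Proof.
move=> mA; rewrite measure_ge0 probability_le1 //.
exact: measurable_preimage_update.
Qed.

Lemma gibbs_kernel_fin_num x A : measurable A -> gibbs_kernel x A \is a fin_num.
Proof. by move=> mA; apply: fin_num_measure; exact: measurable_preimage_update. Qed.

Lemma gibbs_kernelC x A :
  measurable A -> gibbs_kernel x (~` A) = 1 - gibbs_kernel x A.
Proof.
move=> mA; rewrite /gibbs_kernel preimage_setC probability_setC //.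
exact: measurable_preimage_update.
Qed.

Lemma gibbs_kernel_update : ignores_coord ->
  forall x (y : T i) A, gibbs_kernel (update x y) A = gibbs_kernel x A.
Proof.
move=> Q_ign x y A; rewrite /gibbs_kernel (Q_ign _ x).
  by congr (Q x (_ @^-1` A)); apply/funext => z; rewrite update_update.
by move=> j ij; rewrite update_out // eq_sym.
Qed.

(* The measurability proof is an argument only so that the probability
   instance declared below can be found by unification. *)
Definition gibbs_stepP (_ : kernel_measurable Q) (nu : probability X R) :
  set X -> \bar R := gibbs_step Q nu.

Section measurable_kernel.
Hypothesis mQ : kernel_measurable Q.

Definition conditional_kernel : X -> {measure set T i -> \bar R} := fun x => Q x.

HB.instance Definition _ := isKernel.Build _ _ _ _ R conditional_kernel mQ.

Let conditional_kernel_uub : measure_fam_uub conditional_kernel.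
Proof. by exists 2%R => x; rewrite /= probability_setT lte_fin ltr1n. Qed.

HB.instance Definition _ :=
  Kernel_isFinite.Build _ _ _ _ R conditional_kernel conditional_kernel_uub.

Lemma measurable_gibbs_kernel A :
  measurable A -> measurable_fun setT (gibbs_kernel ^~ A).
Proof.
move=> mA; have mB : measurable ((fun p : X * T i => update p.1 p.2) @^-1` A).
  by rewrite -[X in measurable X]setTI; exact: measurable_update.
have := measurable_fun_xsection_finite_kernel conditional_kernel (mem_set mB).
congr measurable_fun; apply/funext => x; rewrite /gibbs_kernel /=.
by congr (Q x _); apply/seteqP; split => y; rewrite /xsection /= inE.
Qed.

Lemma integrable_gibbs_kernel (nu : probability X R) A :
  measurable A -> nu.-integrable setT (gibbs_kernel ^~ A).
Proof.
move=> mA; apply: integrable_unit_valued; first exact: measurable_gibbs_kernel.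
by move=> x; exact: gibbs_kernel_ge0_le1.
Qed.

Variable nu : probability X R.
Local Notation gibbs_stepP := (gibbs_stepP mQ nu).

Lemma gibbs_stepPE A : gibbs_stepP A = \int[nu]_x gibbs_kernel x A.
Proof. by []. Qed.

Let gibbs_stepP0 : gibbs_stepP set0 = 0.
Proof.
rewrite gibbs_stepPE.
under eq_integral do rewrite /gibbs_kernel preimage_set0 measure0.
exact: integral0.
Qed.

Let gibbs_stepP_ge0 A : 0 <= gibbs_stepP A.
Proof. exact: integral_ge0. Qed.

Let gibbs_stepP_sigma_additive : semi_sigma_additive gibbs_stepP.
Proof.
move=> F mF tF mUF; rewrite /gibbs_stepP /gibbs_step.
have -> : (fun x => Q x (update x (i:=i) @^-1` \bigcup_n F n)) =
    (fun x => \sum_(0 <= n <oo) gibbs_kernel x (F n)).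
  apply/funext => x; apply/esym/cvg_lim => //; rewrite preimage_bigcup.
  apply: measure_semi_sigma_additive.
  - by move=> n; exact: measurable_preimage_update.
  - by move=> m n _ _ [y [Fm Fn]]; apply: tF => //; exists (update x y).
  - by rewrite -preimage_bigcup; exact: measurable_preimage_update.
rewrite integral_nneseries //; last by move=> n; exact: measurable_gibbs_kernel.
by apply: is_cvg_nneseries => n _ _; exact: integral_ge0.
Qed.

HB.instance Definition _ := isMeasure.Build _ X R gibbs_stepP
  gibbs_stepP0 gibbs_stepP_ge0 gibbs_stepP_sigma_additive.

Let gibbs_stepPT : gibbs_stepP setT = 1.
Proof.
rewrite gibbs_stepPE (eq_integral (cst 1)) => [|x _].
  by rewrite integral_cst // mul1e; exact: probability_setT.
by rewrite /gibbs_kernel preimage_setT probability_setT.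
Qed.

HB.instance Definition _ :=
  Measure_isProbability.Build _ X R gibbs_stepP gibbs_stepPT.

End measurable_kernel.
End gibbs_kernel.

Section gibbs_step.
Context (R : realType) (K : nat) (dI : 'I_K -> measure_display)
  (T : forall i, measurableType (dI i)).
Local Notation X := (prodm T).
Local Open Scope ereal_scope.
Variable i : 'I_K.
Implicit Types (Q : X -> probability (T i) R) (pi nu a b : probability X R).

Lemma gibbs_stepP_contraction Q (mQ : kernel_measurable Q) a b :
  tv_dist (gibbs_stepP mQ a) (gibbs_stepP mQ b) <= tv_dist a b.
Proof.
apply: tv_dist_le => A mA; rewrite !gibbs_stepPE.
apply: abse_integralB_le_tv_dist; first exact: measurable_gibbs_kernel.
by move=> x; exact: gibbs_kernel_ge0_le1.
Qed.

Lemma gibbs_stepP_nbhdN pi Q (mQ : kernel_measurable Q) M nu :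
  full_conditional pi Q -> (0 <= M)%R ->
  nbhdN pi M nu -> nbhdN pi M (gibbs_stepP mQ nu).
Proof.
move=> [_ _ pi_disint] M0 nu_le A mA /=; rewrite gibbs_stepPE pi_disint //.
by apply: le_integral_dominated => //; exact: measurable_gibbs_kernel.
Qed.

Definition switch_set (E A : set X) : set X := (A `&` E) `|` (~` A `&` ~` E).

Section switch_set.
Variables (Q : X -> probability (T i) R) (E A : set X).
Hypothesis E_update : forall x (y : T i), E (update x y) <-> E x.
Hypothesis mA : measurable A.

Lemma gibbs_kernel_switch_in x :
  E x -> gibbs_kernel Q x (switch_set E A) = gibbs_kernel Q x A.
Proof.
move=> Ex; rewrite /gibbs_kernel; congr (Q x _); apply/seteqP; split => y /=.
  by case=> -[] // _ /E_update.
by move=> Ay; left; split => //; apply/E_update.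
Qed.

Lemma gibbs_kernel_switch_out x :
  ~ E x -> gibbs_kernel Q x (switch_set E A) = 1 - gibbs_kernel Q x A.
Proof.
move=> nEx; rewrite -gibbs_kernelC // /gibbs_kernel; congr (Q x _).
apply/seteqP; split => y /=; first by case=> -[] // _ /E_update.
by move=> nAy; right; split => // /E_update.
Qed.

End switch_set.

Lemma gibbs_kernel_switch_sub Q1 Q2 A x :
  ignores_coord Q1 -> ignores_coord Q2 -> measurable A ->
  let E := [set x | gibbs_kernel Q2 x A <= gibbs_kernel Q1 x A] in
  gibbs_kernel Q1 x (switch_set E A) - gibbs_kernel Q2 x (switch_set E A) =
  `|gibbs_kernel Q1 x A - gibbs_kernel Q2 x A|.
Proof.
move=> Q1_ign Q2_ign mA E.
have E_update x' (y : T i) : E (update x' y) <-> E x'.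
  by rewrite /E /= !gibbs_kernel_update.
have [Ex|nEx] := pselect (E x).
  rewrite !gibbs_kernel_switch_in // gee0_abs // sube_ge0 //.
  by rewrite gibbs_kernel_fin_num.
rewrite !gibbs_kernel_switch_out //; move: nEx; rewrite /E /=.
rewrite -(fineK (gibbs_kernel_fin_num Q1 x mA)).
rewrite -(fineK (gibbs_kernel_fin_num Q2 x mA)).
rewrite lee_fin -!EFinB abse_EFin => /negP; rewrite -ltNge => lt12.
by rewrite ltr0_norm ?subr_lt0 //; congr EFin; lra.
Qed.

Lemma tv_dist_gibbs_stepP_le pi1 pi2 Q1 Q2 (mQ1 : kernel_measurable Q1)
    (mQ2 : kernel_measurable Q2) M nu :
  full_conditional pi1 Q1 -> full_conditional pi2 Q2 -> (0 <= M)%R ->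
  nbhdN pi1 M nu ->
  tv_dist (gibbs_stepP mQ1 nu) (gibbs_stepP mQ2 nu) <=
    (2 * M)%:E * tv_dist pi1 pi2.
Proof.
move=> [Q1_ign _ pi1_disint] [Q2_ign _ pi2_disint] M0 nu_le.
apply: tv_dist_le => A mA; rewrite !gibbs_stepPE.
set E := [set x | gibbs_kernel Q2 x A <= gibbs_kernel Q1 x A].
set A' := switch_set E A.
have mE : measurable E.
  by rewrite -[E]setTI; apply: measurable_lee => //; exact: measurable_gibbs_kernel.
have mA' : measurable A'.
  by apply: measurableU; apply: measurableI => //; exact: measurableC.
have mQ12 : measurable_fun setT (fun x => gibbs_kernel Q1 x A - gibbs_kernel Q2 x A).
  by apply: emeasurable_funB; exact: measurable_gibbs_kernel.
have mQ12_abs := measurableT_comp (@abse_measurable R setT) mQ12.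
rewrite -integralB //; try exact: integrable_gibbs_kernel.
apply: (le_trans (le_abse_integral nu measurableT mQ12)).
apply: (le_trans (le_integral_dominated M0 nu_le (fun x => abse_ge0 _) mQ12_abs)).
rewrite mulrC EFinM -muleA; apply: lee_wpmul2l; first by rewrite lee_fin.
under eq_integral do rewrite -(gibbs_kernel_switch_sub _ Q1_ign Q2_ign mA) -/E -/A'.
rewrite integralB //; try exact: integrable_gibbs_kernel.
rewrite -pi1_disint //.
have tv_A' := le_tv_dist pi1 pi2 mA'.
have tv_Q2 : `|pi2 A' - \int[pi1]_x gibbs_kernel Q2 x A'| <= tv_dist pi1 pi2.
  rewrite pi2_disint // tv_distC; apply: abse_integralB_le_tv_dist.
    exact: measurable_gibbs_kernel.
  by move=> x; exact: gibbs_kernel_ge0_le1.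
apply: (le_trans _ (le_trans (leeD tv_A' tv_Q2) _)).
  have fin_int := integrable_fin_num measurableT (integrable_gibbs_kernel mQ2 pi1 mA').
  rewrite -(fineK (fin_num_measure pi1 A' mA')) -(fineK (fin_num_measure pi2 A' mA')).
  rewrite -(fineK fin_int) -!EFinB !abse_EFin -EFinD lee_fin.
  exact: le_trans (ler_norm _) (ler_distD _ _ _).
by rewrite (_ : 2%R = 1 + 1)%R // EFinD ge0_muleDl // mul1e.
Qed.

End gibbs_step.

Section gibbs_scan.
Context (R : realType) (K : nat) (dI : 'I_K -> measure_display)
  (T : forall i, measurableType (dI i)).
Local Notation X := (prodm T).
Local Open Scope ereal_scope.

Section scan.
Variables (Q : forall i : 'I_K, X -> probability (T i) R)
  (mQ : forall i, kernel_measurable (Q i)).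

Definition gibbs_scanP (s : seq 'I_K) (nu : probability X R) : probability X R :=
  foldl (fun (nu : probability X R) i => gibbs_stepP (@mQ i) nu : probability X R) nu s.

Lemma foldl_gibbs_step s (nu : probability X R) :
  foldl (fun nu i => gibbs_step (Q i) nu) (nu : set X -> \bar R) s = gibbs_scanP s nu.
Proof.
by elim: s nu => [|i s IHs] nu //=; exact: (IHs (gibbs_stepP (@mQ i) nu)).
Qed.

Lemma gibbs_scanP_contraction s (a b : probability X R) :
  tv_dist (gibbs_scanP s a) (gibbs_scanP s b) <= tv_dist a b.
Proof.
elim: s a b => [|i s IHs] a b //=.
exact: le_trans (IHs _ _) (gibbs_stepP_contraction _ _ _).
Qed.

End scan.

Lemma tv_dist_gibbs_scanP_le (pi1 pi2 : probability X R)
    (Q1 Q2 : forall i : 'I_K, X -> probability (T i) R)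
    (mQ1 : forall i, kernel_measurable (Q1 i)) (mQ2 : forall i, kernel_measurable (Q2 i))
    (M : R) :
  (forall i, full_conditional pi1 (Q1 i)) -> (forall i, full_conditional pi2 (Q2 i)) ->
  (0 <= M)%R -> forall s nu, nbhdN pi1 M nu ->
  tv_dist (gibbs_scanP mQ1 s nu) (gibbs_scanP mQ2 s nu) <=
    (2 * M * (size s)%:R)%:E * tv_dist pi1 pi2.
Proof.
move=> HF1 HF2 M0; elim=> [|i s IHs] nu nu_le /=.
  by rewrite tv_dist_self mulr0 mul0e lexx.
set nu1 := gibbs_stepP (mQ1 i) nu; set nu2 := gibbs_stepP (mQ2 i) nu.
apply: le_trans (tv_dist_triangle _ (gibbs_scanP mQ2 s nu1) _) _.
have scan_tv := IHs nu1 (gibbs_stepP_nbhdN (mQ1 i) (HF1 i) M0 nu_le).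
have step_tv := le_trans (gibbs_scanP_contraction mQ2 s nu1 nu2)
  (tv_dist_gibbs_stepP_le (mQ1 i) (mQ2 i) (HF1 i) (HF2 i) M0 nu_le).
apply: le_trans (leeD scan_tv step_tv) _.
rewrite -ge0_muleDl ?lee_fin ?mulr_ge0 // -EFinD.
by rewrite -[X in (_ + X)%R]mulr1 -mulrDr natr1.
Qed.

End gibbs_scan.

Theorem proposition2p2 (R : realType) (K : nat) (dI : 'I_K -> measure_display)
  (T : forall i, measurableType (dI i))
  (pi1 pi2 : probability (prodm T) R)
  (Q1 Q2 : forall i : 'I_K, prodm T -> probability (T i) R)
  (HQ1 : forall i, full_conditional pi1 (Q1 i))
  (HQ2 : forall i, full_conditional pi2 (Q2 i))
  (M : R) (HM : 1 <= M)
  (mu : probability (prodm T) R)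
  (Hmu : mu \in nbhdN pi1 M `|` nbhdN pi2 M) :
  (tv_dist (gibbs_scan Q1 mu) (gibbs_scan Q2 mu)
     <= (2 * M * K%:R)%:E * tv_dist pi1 pi2)%E.
Proof.
have mQ1 i : kernel_measurable (Q1 i) by case: (HQ1 i).
have mQ2 i : kernel_measurable (Q2 i) by case: (HQ2 i).
have M0 : 0 <= M := le_trans ler01 HM.
rewrite /gibbs_scan (foldl_gibbs_step mQ1) (foldl_gibbs_step mQ2).
move: Hmu; rewrite in_setU => /orP[] /set_mem mu_le.
  have := tv_dist_gibbs_scanP_le mQ1 mQ2 HQ1 HQ2 M0 (enum 'I_K) mu_le.
  by rewrite size_enum_ord.
rewrite tv_distC [tv_dist pi1 _]tv_distC.
have := tv_dist_gibbs_scanP_le mQ2 mQ1 HQ2 HQ1 M0 (enum 'I_K) mu_le.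
by rewrite size_enum_ord.
Qed.
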